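(* Let $\rho$ be a state of $A$ and $\sigma$ a state of $B$, and let $\mathcal{H}_S:=\mathrm{supp}\,\mathcal{G}(\sigma)\subseteq\mathcal{H}_B$, regarded as a system $S$ carrying the restriction of $U_B$ (this subspace is invariant under every $U_B(g)$). Then there exists a $G$-covariant channel from $A$ to $B$ mapping $\rho$ to $\sigma$ if and only if there exists a $G$-covariant channel from $A$ to $S$ mapping $\rho$ to $\sigma$.
   Context: $G$ is a compact group with normalized Haar measure $dg$; finite-dimensional systems $A,B$ carry continuous unitary representations $U_A,U_B$. $\mathcal{G}(\sigma)=\int dg\,U_B(g)\sigma U_B(g)^\dagger$. A channel $\mathcal{E}$ from $X$ to $Y$ is $G$-covariant if $\mathcal{E}(U_X(g)MU_X(g)^\dagger)=U_Y(g)\mathcal{E}(M)U_Y(g)^\dagger$ for all $g$ and $M$. *)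

From HB Require Import structures.
From mathcomp Require Import all_boot all_order all_algebra.
From mathcomp Require Import sesquilinear spectral.
From mathcomp Require Import complex.
From mathcomp Require Import all_classical all_reals.
From mathcomp Require Import topology normedtype measure lebesgue_integral probability.

Set Implicit Arguments.
Unset Strict Implicit.
Unset Printing Implicit Defensive.

Import Order.TTheory GRing.Theory Num.Theory.
Import numFieldNormedType.Exports.
Local Open Scope classical_set_scope.
Local Open Scope ring_scope.
Local Open Scope complex_scope.

Record CompactGroup (R : realType) := {
  cgT :> ptopologicalType;
  cg_mul : cgT -> cgT -> cgT;
  cg_inv : cgT -> cgT;
  cg_one : cgT;
  cg_mulA : forall x y z, cg_mul x (cg_mul y z) = cg_mul (cg_mul x y) z;
  cg_mul1g : forall x, cg_mul cg_one x = x;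
  cg_mulVg : forall x, cg_mul (cg_inv x) x = cg_one;
  cg_mul_cont : continuous (fun p : cgT * cgT => cg_mul p.1 p.2);
  cg_inv_cont : continuous cg_inv;
  cg_hausdorff : hausdorff_space cgT;
  cg_compact : compact [set: cgT];
  cg_haar : probability (g_sigma_algebraType (@open cgT)) R;
  cg_haar_invariant : forall (g : cgT) (A : set (g_sigma_algebraType (@open cgT))),
      measurable A -> cg_haar (cg_mul g @` A) = cg_haar A
}.

Definition adj (R : realType) m n (M : 'M[R[i]]_(m, n)) : 'M[R[i]]_(n, m) :=
  (M ^t*)%sesqui.

Record URep (R : realType) (G : CompactGroup R) (n : nat) := {
  rep :> G -> 'M[R[i]]_n;
  rep_unitary : forall g, rep g *m adj (rep g) = 1%:M;
  rep_morph : forall g h : G, rep (@cg_mul _ G g h) = rep g *m rep h;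
  rep_one : rep (@cg_one _ G) = 1%:M;
  rep_cont_Re : forall i j, continuous (fun g : G => complex.Re (rep g i j));
  rep_cont_Im : forall i j, continuous (fun g : G => complex.Im (rep g i j))
}.

(* The G-twirl  G(s) = \int dg U(g) s U(g)^dagger (entrywise Haar integral) *)
Definition twirl (R : realType) (G : CompactGroup R) n (U : G -> 'M[R[i]]_n)
    (s : 'M[R[i]]_n) : 'M[R[i]]_n :=
  \matrix_(i, j)
    ((Rintegral (@cg_haar _ G) setT
        (fun g : g_sigma_algebraType (@open G) =>
           complex.Re ((U g *m s *m adj (U g)) i j)))
     +i*
     (Rintegral (@cg_haar _ G) setT
        (fun g : g_sigma_algebraType (@open G) =>
           complex.Im ((U g *m s *m adj (U g)) i j)))).

Definition psdmx (R : realType) n (M : 'M[R[i]]_n) :=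
  forall v : 'cV[R[i]]_n, 0 <= (adj v *m M *m v) 0 0.

Definition is_state (R : realType) n (M : 'M[R[i]]_n) :=
  psdmx M /\ \tr M = 1.

(* k x k block matrix with m x m blocks is PSD *)
Definition block_psd (R : realType) m k (X : 'I_k -> 'I_k -> 'M[R[i]]_m) :=
  forall v : 'I_k -> 'cV[R[i]]_m,
    0 <= \sum_(a < k) \sum_(b < k) (adj (v a) *m X a b *m v b) 0 0.

(* complete positivity: id_k (x) Phi is positive for every k *)
Definition completely_positive (R : realType) m n
    (Phi : 'M[R[i]]_m -> 'M[R[i]]_n) :=
  forall k (X : 'I_k -> 'I_k -> 'M[R[i]]_m),
    block_psd X -> block_psd (fun a b => Phi (X a b)).

Definition trace_preserving (R : realType) m n
    (Phi : 'M[R[i]]_m -> 'M[R[i]]_n) := forall M, \tr (Phi M) = \tr M.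

Definition channel (R : realType) m n (Phi : 'M[R[i]]_m -> 'M[R[i]]_n) :=
  linear Phi /\ completely_positive Phi /\ trace_preserving Phi.

Definition covariant (R : realType) (G : CompactGroup R) m n
    (UX : G -> 'M[R[i]]_m) (UY : G -> 'M[R[i]]_n)
    (Phi : 'M[R[i]]_m -> 'M[R[i]]_n) :=
  forall (g : G) (M : 'M[R[i]]_m),
    Phi (UX g *m M *m adj (UX g)) = UY g *m Phi M *m adj (UY g).

(* Let Q := 1 - V V^* be the projection onto the orthogonal
   complement of H_S.  The range of the twirl G(sigma) is invariant under every
   U_B(g), hence so is H_S, and Q commutes with U_B.
   - A covariant channel Psi into S gives the covariant channel
     M |-> V Psi(M) V^* into B.
   - Conversely, a covariant channel Phi into B is compressed to
     M |-> V^* Phi(M) V + tr(Q Phi(M))/r * 1, which is again covariant,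
     completely positive and trace preserving.  It sends rho to a state that
     dilates back to sigma because sigma is supported in H_S: for w in the range
     of Q, 0 = <w, G(sigma) w> is the Haar integral of the continuous nonnegative
     function g |-> <U_B(g)^* w, sigma U_B(g)^* w>, which must then vanish
     everywhere since the Haar measure of a compact group charges every
     nonempty open set; at g = 1 this gives <w, sigma w> = 0, so sigma w = 0. *)

From HB Require Import structures.
From mathcomp Require Import all_boot all_order all_algebra.
From mathcomp Require Import sesquilinear spectral.
From mathcomp Require Import complex.
From mathcomp Require Import all_classical all_reals.
From mathcomp Require Import topology normedtype measure lebesgue_integral probability.
From mathcomp Require Import lebesgue_measure measurable_realfun.
From mathcomp Require Import ring lra.

Set Implicit Arguments.
Unset Strict Implicit.
Unset Printing Implicit Defensive.

Import Order.TTheory GRing.Theory Num.Theory.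
Import numFieldNormedType.Exports.
Local Open Scope classical_set_scope.
Local Open Scope ring_scope.

Section Adjoint.
Context {R : realType}.
Local Notation C := R[i].

Lemma adjmxE m n (A : 'M[C]_(m, n)) i j : adj A i j = (A j i)^*.
Proof. by rewrite !mxE. Qed.

Lemma adjmxK m n (A : 'M[C]_(m, n)) : adj (adj A) = A.
Proof. exact: trmxCK. Qed.

Lemma adjmx_mul m n p (A : 'M[C]_(m, n)) (B : 'M[C]_(n, p)) :
  adj (A *m B) = adj B *m adj A.
Proof. by rewrite /adj trmx_mul map_mxM. Qed.

Lemma adjmxD m n (A B : 'M[C]_(m, n)) : adj (A + B) = adj A + adj B.
Proof. by rewrite /adj linearD map_mxD. Qed.

Lemma adjmxZ m n a (A : 'M[C]_(m, n)) : adj (a *: A) = a^* *: adj A.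
Proof. by rewrite /adj linearZ map_mxZ. Qed.

Lemma adjmxB m n (A B : 'M[C]_(m, n)) : adj (A - B) = adj A - adj B.
Proof. by rewrite adjmxD -scaleN1r adjmxZ rmorphN1 scaleN1r. Qed.

Lemma adjmx1 n : adj (1%:M : 'M[C]_n) = 1%:M.
Proof. by apply/matrixP => i j; rewrite !mxE eq_sym rmorphMn rmorph1. Qed.

Lemma adjmx_delta m n (i : 'I_m) (j : 'I_n) :
  adj (delta_mx i j : 'M[C]_(m, n)) = delta_mx j i.
Proof.
by apply/matrixP => a b; rewrite !mxE; case: eqP; case: eqP; rewrite /= ?rmorph1 ?rmorph0.
Qed.

End Adjoint.

Section PositiveSemidefinite.
Context {R : realType}.
Local Notation C := R[i].

Lemma lin_quad_ge0_eq0 (x c : R) :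
  0 <= c -> (forall t, 0 <= t * x + t ^+ 2 * c) -> x = 0.
Proof.
move=> c0 H; have c1 : 0 < c + 1 by lra.
have := H (- x / (c + 1)); set s := (c + 1)^-1.
have s0 : 0 < s by rewrite invr_gt0.
have sc : s * (c + 1) = 1 by rewrite mulVf // gt_eqF.
rewrite mulNr expr2 => h.
have : x * x * s <= 0 by nra.
nra.
Qed.

Lemma sesqui_ge0_cross_eq0 (a b c : C) :
  0 <= c -> (forall z, 0 <= z * a + z^* * b + z^* * z * c) -> a = 0 /\ b = 0.
Proof.
case: a => a1 a2; case: b => b1 b2; case: c => c1 c2.
rewrite lecE /= => /andP [/eqP c20 c10] H.
have Hr t := H (t%:C)%C; have Hi t := H (0 +i* t)%C.
have Rt t : 0 <= t * (a1 + b1) + t ^+ 2 * c1.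
  by move: (Hr t); rewrite lecE /= expr2 c20 => /andP [_ h]; nra.
have Ri t : 0 <= t * (b2 - a2) + t ^+ 2 * c1.
  by move: (Hi t); rewrite lecE /= expr2 c20 => /andP [_ h]; nra.
have I1 : a2 + b2 = 0 by move: (Hr 1); rewrite lecE /= c20 => /andP [/eqP h _]; nra.
have I2 : a1 - b1 = 0 by move: (Hi 1); rewrite lecE /= c20 => /andP [/eqP h _]; nra.
have E1 := lin_quad_ge0_eq0 c10 Rt; have E2 := lin_quad_ge0_eq0 c10 Ri.
by split; congr (_ +i* _)%C; lra.
Qed.

Lemma quad_form_expand n (M : 'M[C]_n) (v u : 'cV[C]_n) (z : C) :
  (adj (v + z *: u) *m M *m (v + z *: u)) 0 0 =
  (adj v *m M *m v) 0 0 + z * (adj v *m M *m u) 0 0 + z^* * (adj u *m M *m v) 0 0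
  + z^* * z * (adj u *m M *m u) 0 0.
Proof.
rewrite adjmxD adjmxZ !mulmxDl !mulmxDr -!scalemxAl -!scalemxAr scalerA !mxE.
ring.
Qed.

Lemma psdmx_quad_eq0 n (M : 'M[C]_n) (v : 'cV[C]_n) :
  psdmx M -> (adj v *m M *m v) 0 0 = 0 ->
  forall u : 'cV[C]_n, (adj v *m M *m u) 0 0 = 0 /\ (adj u *m M *m v) 0 0 = 0.
Proof.
move=> M_psd v0 u; apply: sesqui_ge0_cross_eq0 (M_psd u) _ => z.
by have := M_psd (v + z *: u); rewrite quad_form_expand v0 add0r.
Qed.

Lemma psdmx_ker n (M : 'M[C]_n) (v : 'cV[C]_n) :
  psdmx M -> (adj v *m M *m v) 0 0 = 0 -> M *m v = 0 /\ adj v *m M = 0.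
Proof.
move=> M_psd v0; split; apply/matrixP => i j; rewrite [RHS]mxE.
  rewrite (ord1 j).
  have [_ <-] := psdmx_quad_eq0 M_psd v0 (delta_mx i 0).
  by rewrite adjmx_delta -mulmxA -rowE [RHS]mxE.
rewrite (ord1 i).
have [<- _] := psdmx_quad_eq0 M_psd v0 (delta_mx j 0).
by rewrite -colE [RHS]mxE.
Qed.

End PositiveSemidefinite.

Section CompletePositivity.
Context {R : realType}.
Local Notation C := R[i].

Lemma completely_positive_sandwich m n p (Phi : 'M[C]_m -> 'M[C]_n)
    (L : 'M[C]_(n, p)) :
  completely_positive Phi -> completely_positive (fun M => adj L *m Phi M *m L).
Proof.
move=> Phi_cp k X X_psd v; have := Phi_cp k X X_psd (fun a => L *m v a).
congr (_ <= _); apply: eq_bigr => a _; apply: eq_bigr => b _.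
by rewrite adjmx_mul !mulmxA.
Qed.

Lemma completely_positive_sum m n I (r : seq I) (F : I -> 'M[C]_m -> 'M[C]_n) :
  (forall i, completely_positive (F i)) ->
  completely_positive (fun M => \sum_(i <- r) F i M).
Proof.
move=> F_cp k X X_psd v.
under eq_bigr do under eq_bigr do rewrite mulmx_sumr mulmx_suml summxE.
rewrite (eq_bigr _ (fun a _ => exchange_big _ _ _ _ _ _)) exchange_big /=.
by apply: sumr_ge0 => i _; exact: F_cp.
Qed.

Lemma completely_positiveZ m n (Phi : 'M[C]_m -> 'M[C]_n) (c : C) :
  0 <= c -> completely_positive Phi -> completely_positive (fun M => c *: Phi M).
Proof.
move=> c0 Phi_cp k X X_psd v.
under eq_bigr do under eq_bigr do rewrite -scalemxAr -scalemxAl mxE.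
under eq_bigr do rewrite -mulr_sumr.
by rewrite -mulr_sumr mulr_ge0 // Phi_cp.
Qed.

Lemma completely_positiveD m n (Phi1 Phi2 : 'M[C]_m -> 'M[C]_n) :
  completely_positive Phi1 -> completely_positive Phi2 ->
  completely_positive (fun M => Phi1 M + Phi2 M).
Proof.
move=> cp1 cp2 k X X_psd v.
under eq_bigr do under eq_bigr do rewrite mulmxDr mulmxDl mxE.
under eq_bigr do rewrite big_split.
by rewrite big_split addr_ge0 // ?cp1 ?cp2.
Qed.

Lemma delta_sandwich p q (Y : 'M[C]_q) (j : 'I_p) (k : 'I_q) :
  delta_mx j k *m Y *m delta_mx k j = Y k k *: (delta_mx j j : 'M[C]_p).
Proof.
have -> : delta_mx j k = delta_mx j (0 : 'I_1) *m delta_mx 0 k :> 'M[C]_(p, q).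
  by rewrite mul_delta_mx.
have -> : delta_mx k j = delta_mx k (0 : 'I_1) *m delta_mx 0 j :> 'M[C]_(q, p).
  by rewrite mul_delta_mx.
rewrite -!mulmxA (mulmxA (delta_mx 0 k)) (mulmxA _ _ (delta_mx 0 j)).
rewrite -rowE -colE [col k (row k Y)]mx11_scalar !mxE.
by rewrite mul_scalar_mx -scalemxAr mul_delta_mx.
Qed.

Lemma sum_delta_sandwich p q (Y : 'M[C]_q) :
  \sum_(k < q) \sum_(j < p) delta_mx j k *m Y *m delta_mx k j =
  \tr Y *: (1%:M : 'M[C]_p).
Proof.
under eq_bigr do under eq_bigr do rewrite delta_sandwich.
by under eq_bigr do rewrite -scaler_sumr -mx1_sum_delta; rewrite -scaler_suml.
Qed.

Lemma completely_positive_trace_replace m n p q (Phi : 'M[C]_m -> 'M[C]_n)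
    (L : 'M[C]_(n, q)) : completely_positive Phi ->
  completely_positive (fun M => \tr (adj L *m Phi M *m L) *: (1%:M : 'M[C]_p)).
Proof.
move=> Phi_cp.
have -> : (fun M => \tr (adj L *m Phi M *m L) *: (1%:M : 'M[C]_p)) =
    (fun M => \sum_(k < q) \sum_(j < p)
       adj (L *m delta_mx k j) *m Phi M *m (L *m delta_mx k j)).
  apply: funext => M; rewrite -sum_delta_sandwich.
  by apply: eq_bigr => k _; apply: eq_bigr => j _; rewrite adjmx_mul adjmx_delta !mulmxA.
apply: completely_positive_sum => k; apply: completely_positive_sum => j.
exact: completely_positive_sandwich.
Qed.

End CompletePositivity.

Section Isometry.
Context {R : realType} {n r : nat}.
Local Notation C := R[i].
Variable V : 'M[C]_(n, r).
Hypothesis V_isometry : adj V *m V = 1%:M.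
Local Notation P := (V *m adj V).
Local Notation Q := (1%:M - V *m adj V).

Lemma isometry_proj_idem : P *m P = P.
Proof. by rewrite mulmxA -(mulmxA V) V_isometry mulmx1. Qed.

Lemma isometry_coproj_adj : adj Q = Q.
Proof. by rewrite adjmxB adjmx1 adjmx_mul adjmxK. Qed.

Lemma isometry_coproj_idem : Q *m Q = Q.
Proof. by rewrite mulmxBl mul1mx mulmxBr mulmx1 isometry_proj_idem subrr subr0. Qed.

Lemma isometry_coproj_trace X : \tr (adj Q *m X *m Q) = \tr (Q *m X).
Proof. by rewrite isometry_coproj_adj mxtrace_mulC mulmxA isometry_coproj_idem. Qed.

Lemma channel_dilate m (Psi : 'M[C]_m -> 'M[C]_r) :
  channel Psi -> channel (fun M => V *m Psi M *m adj V).
Proof.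
move=> [Psi_lin [Psi_cp Psi_tp]]; split; [|split].
- by move=> a M N /=; rewrite Psi_lin mulmxDr mulmxDl -scalemxAr -scalemxAl.
- by rewrite -{1}[V]adjmxK; exact: completely_positive_sandwich.
- by move=> M /=; rewrite mxtrace_mulC mulmxA V_isometry mul1mx Psi_tp.
Qed.

(* The trace of [Phi M] lost outside the range of [V] is spread uniformly over
   [C^r]. *)
Definition compress m (Phi : 'M[C]_m -> 'M[C]_n) M : 'M[C]_r :=
  adj V *m Phi M *m V + r%:R^-1 *: (\tr (adj Q *m Phi M *m Q) *: 1%:M).

Lemma channel_compress m (Phi : 'M[C]_m -> 'M[C]_n) :
  (0 < r)%N -> channel Phi -> channel (compress Phi).
Proof.
move=> r_gt0 [Phi_lin [Phi_cp Phi_tp]]; split; [|split].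
- move=> a M N; rewrite /compress Phi_lin.
  rewrite [adj V *m _]mulmxDr [adj Q *m _]mulmxDr.
  rewrite [(_ + _) *m V]mulmxDl [(_ + _) *m Q]mulmxDl -!scalemxAr -!scalemxAl.
  rewrite mxtraceD mxtraceZ scalerDl -scalerA !scalerDr.
  rewrite [r%:R^-1 *: (a *: _)]scalerA [a *: (r%:R^-1 *: _)]scalerA.
  by rewrite (mulrC r%:R^-1) addrACA.
- apply: completely_positiveD; first exact: completely_positive_sandwich.
  apply: completely_positiveZ; first by rewrite invr_ge0 ler0n.
  exact: completely_positive_trace_replace.
- move=> M; rewrite /compress mxtraceD !mxtraceZ mxtrace1 mulrCA.
  rewrite mulVf ?pnatr_eq0 -?lt0n // mulr1 isometry_coproj_trace.
  rewrite mxtrace_mulC mulmxA -mxtraceD -mulmxDl.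
  by rewrite addrC subrK mul1mx Phi_tp.
Qed.

Lemma compress_dilate m (Phi : 'M[C]_m -> 'M[C]_n) M :
  Q *m Phi M = 0 -> Phi M *m Q = 0 -> V *m compress Phi M *m adj V = Phi M.
Proof.
move=> QX XQ.
have PX : P *m Phi M = Phi M by rewrite -[P](subKr 1%:M) mulmxBl mul1mx QX subr0.
have XP : Phi M *m P = Phi M by rewrite -[P](subKr 1%:M) mulmxBr mulmx1 XQ subr0.
rewrite /compress isometry_coproj_trace QX mxtrace0 scale0r scaler0 addr0.
by rewrite !mulmxA PX -mulmxA XP.
Qed.

Section Covariance.
Variables (G : CompactGroup R) (m : nat) (UA : G -> 'M[C]_m) (UB : G -> 'M[C]_n).
Hypothesis UB_proj : forall g, P *m UB g = UB g *m P.

Lemma covariant_dilate (Psi : 'M[C]_m -> 'M[C]_r) :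
  covariant UA (fun g => adj V *m UB g *m V) Psi ->
  covariant UA UB (fun M => V *m Psi M *m adj V).
Proof.
move=> Psi_cov g M; rewrite Psi_cov; set W := adj V *m UB g *m V.
have VW : V *m W = UB g *m V.
  by rewrite /W !mulmxA UB_proj -!mulmxA V_isometry mulmx1.
have -> : V *m (W *m Psi M *m adj W) *m adj V = V *m W *m Psi M *m adj (V *m W).
  by rewrite adjmx_mul !mulmxA.
by rewrite VW adjmx_mul !mulmxA.
Qed.

Hypothesis UB_unitary : forall g, UB g *m adj (UB g) = 1%:M.

Lemma covariant_compress (Phi : 'M[C]_m -> 'M[C]_n) :
  covariant UA UB Phi -> covariant UA (fun g => adj V *m UB g *m V) (compress Phi).
Proof.
move=> Phi_cov g M; rewrite /compress Phi_cov; set W := adj V *m UB g *m V.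
have WV : W *m adj V = adj V *m UB g.
  by rewrite /W -!mulmxA -UB_proj !mulmxA V_isometry mul1mx.
have VW : V *m adj W = adj (UB g) *m V.
  by have := congr1 (@adj _ _ _) WV; rewrite !adjmx_mul !adjmxK.
have WW : W *m adj W = 1%:M.
  rewrite {1}/W -mulmxA VW !mulmxA -(mulmxA _ (UB g)) UB_unitary.
  by rewrite mulmx1 V_isometry.
have UQU : adj (UB g) *m Q *m UB g = Q.
  rewrite mulmxBr mulmxBl mulmx1 -mulmxA UB_proj (mulmxA (adj (UB g))).
  by rewrite (mulmx1C (UB_unitary g)) mul1mx.
rewrite !isometry_coproj_trace !mulmxA mxtrace_mulC !mulmxA UQU.
rewrite mulmxDr mulmxDl -!scalemxAr -!scalemxAl mulmx1 WW.
by rewrite !mulmxA WV -(mulmxA _ V (adj W)) VW !mulmxA.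
Qed.

End Covariance.

End Isometry.

Section HaarIntegral.
Context {R : realType} {G : CompactGroup R}.
Local Notation T := (g_sigma_algebraType (@open (cgT G))).
Local Notation mu := (cg_haar G).

Lemma cg_mulgV (x : G) : cg_mul x (cg_inv x) = cg_one G.
Proof.
rewrite -[LHS]cg_mul1g -{1}(cg_mulVg (cg_inv x)) -cg_mulA (cg_mulA _ x).
by rewrite cg_mulVg cg_mul1g cg_mulVg.
Qed.

Lemma cg_mulg1 (x : G) : cg_mul x (cg_one G) = x.
Proof. by rewrite -(cg_mulVg x) cg_mulA cg_mulgV cg_mul1g. Qed.

Lemma continuous_cg_mull (h : G) : continuous (cg_mul h).
Proof.
move=> x.
apply: (@continuous_comp _ _ _ (pair h) (fun p : G * G => cg_mul p.1 p.2)).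
  exact: (cvg_pair (cvg_cst h) cvg_id).
exact: cg_mul_cont.
Qed.

Lemma continuous_cg_measurable_fun (f : G -> R) :
  continuous f -> measurable_fun [set: T] (f : T -> R).
Proof.
move=> /continuousP cf; apply: (measurability _ (RGenOpens.measurableE R)).
move=> _ [_ [a [b ->] <-]]; rewrite setTI; apply: sub_sigma_algebra.
apply: cf; exact: interval_open.
Qed.

Lemma continuous_haar_integrable (f : G -> R) :
  continuous f -> mu.-integrable [set: T] (EFin \o (f : T -> R)).
Proof.
move=> cf; apply: measurable_bounded_integrable => //.
- by rewrite /= probability_setT ltry.
- exact: continuous_cg_measurable_fun.
have /compact_bounded[M [Mr fM]] : compact (f @` [set: G]).
  by apply: continuous_compact; [exact: continuous_subspaceT | exact: cg_compact].
by exists M; split => // x Mx y _; apply: (fM x Mx); exists y.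
Qed.

Lemma haar_integral_translate (f : G -> R) (h : G) : continuous f ->
  \int[mu]_(x in [set: T]) f (cg_mul h x) = \int[mu]_(x in [set: T]) f x.
Proof.
move=> cf; rewrite /Rintegral; congr fine.
have mh : measurable_fun [set: T] (cg_mul h : T -> T).
  have /continuousP ch := continuous_cg_mull (h:=h).
  apply: (measurability _ (erefl : @measurable _ T = <<s @open G >>)) => _ [B oB <-].
  by rewrite setTI; apply: sub_sigma_algebra; exact: ch.
have mf : measurable_fun [set: T] (EFin \o (f : T -> R)).
  by apply/measurable_EFinP; exact: continuous_cg_measurable_fun.
have fhi : mu.-integrable (cg_mul h @^-1` [set: T])
    ((EFin \o (f : T -> R)) \o cg_mul h).
  rewrite preimage_setT; apply: continuous_haar_integrable => x.
  by apply: continuous_comp; [exact: continuous_cg_mull | exact: cf].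
have := integral_pushforward mh mf fhi measurableT; rewrite preimage_setT => <-.
apply: eq_measure_integral => A mA _ /=; rewrite /pushforward.
have -> : cg_mul h @^-1` A = [set cg_mul (cg_inv h) a | a in A].
  apply/seteqP; split => [x Ax|_ [a Aa <-]] /=.
    by exists (cg_mul h x); rewrite // cg_mulA cg_mulVg cg_mul1g.
  by rewrite cg_mulA cg_mulgV cg_mul1g.
exact: cg_haar_invariant.
Qed.

Lemma haar_negligible_ge (f : G -> R) (c : R) :
  continuous f -> (forall x, 0 <= f x) -> \int[mu]_(x in [set: T]) f x = 0 ->
  0 < c -> mu.-negligible [set x : T | c <= f x].
Proof.
move=> cf f0 If0 c0.
have mf : measurable_fun [set: T] (EFin \o (f : T -> R)).
  by apply/measurable_EFinP; exact: continuous_cg_measurable_fun cf.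
have If0E : (\int[mu]_(x in [set: T]) `|(f x)%:E| = 0)%E.
  under eq_integral => x _ do rewrite abse_EFin ger0_norm ?f0 //.
  rewrite -(fineK (integrable_fin_num measurableT (continuous_haar_integrable cf))).
  by rewrite -/(Rintegral _ _ _) If0.
have E : [set x : T | c <= f x] =
    [set: T] `&` [set x | (c%:E <= `|(EFin \o (f : T -> R)) x|)%E].
  by rewrite setTI; apply/seteqP; split => x /=; rewrite ger0_norm ?f0 // lee_fin.
have := le_integral_abse mu measurableT mf c0.
rewrite -E If0E pmule_rle0 ?lte_fin // => mu0.
apply/negligibleP; last by apply/eqP; rewrite eq_le mu0 measure_ge0.
have -> : [set x : T | c <= f x] =
    [set: T] `&` [set x | (c%:E <= (EFin \o (f : T -> R)) x)%E].
  by rewrite setTI; apply/seteqP; split => x /=; rewrite lee_fin.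
exact: emeasurable_fun_c_infty.
Qed.

Lemma continuous_ge0_haar_integral_eq0 (f : G -> R) :
  continuous f -> (forall x, 0 <= f x) -> \int[mu]_(x in [set: T]) f x = 0 ->
  forall x, f x = 0.
Proof.
move=> cf f0 If0 x0; apply/eqP; rewrite eq_le f0 andbT leNgt; apply/negP => fx0.
pose c := f x0 / 2.
have c0 : 0 < c by rewrite divr_gt0.
have cfx0 : c < f x0 by rewrite ltr_pdivrMr // ltr_pMr // ltr1n.
have cfh h : continuous (fun x => f (cg_mul h x)).
  by move=> x; apply: continuous_comp; [exact: continuous_cg_mull | exact: cf].
(* Finitely many translates of the open set [c < f] cover the compact group,
   and each of them is negligible. *)
pose O h := [set x : G | c < f (cg_mul h x)].
have Oopen h : [set: G] h -> open (O h).
  by move=> _; have /continuousP /(_ _ (@open_gt _ c)) := cfh h.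
have Ocover : [set: G] `<=` \bigcup_(h in [set: G]) O h.
  move=> x _; exists (cg_mul x0 (cg_inv x)) => //.
  by rewrite /O /= -cg_mulA cg_mulVg cg_mulg1.
have := @cg_compact _ G; rewrite compact_cover => /(_ _ _ _ Oopen Ocover) [D _ DO].
pose h k := nth x0 (finmap.enum_fset D) k.
have : mu.-negligible [set: T].
  apply: (negligibleS (A := \bigcup_k [set x : T | c <= f (cg_mul (h k) x)])).
    move=> x _; have [i iD Oix] := DO x I.
    by exists (index i (finmap.enum_fset D)); rewrite //= /h nth_index // ltW.
  apply: negligible_bigcup => k; apply: haar_negligible_ge => //.
  by rewrite haar_integral_translate.
case=> N [_ muN0 TN].
have NT : N = [set: T] by apply/seteqP; split.
by move: muN0; rewrite NT probability_setT => /eqP; rewrite onee_eq0.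
Qed.

End HaarIntegral.

Section ComplexHaarIntegral.
Local Notation Re := complex.Re.
Local Notation Im := complex.Im.

Context {R : realType}.
Implicit Types x y : R[i].

Lemma complex_ReD x y : Re (x + y) = Re x + Re y. Proof. by case: x; case: y. Qed.
Lemma complex_ImD x y : Im (x + y) = Im x + Im y. Proof. by case: x; case: y. Qed.
Lemma complex_ReM x y : Re (x * y) = Re x * Re y - Im x * Im y.
Proof. by case: x; case: y. Qed.
Lemma complex_ImM x y : Im (x * y) = Re x * Im y + Im x * Re y.
Proof. by case: x; case: y. Qed.
Lemma complex_ReJ x : Re x^* = Re x. Proof. by case: x. Qed.
Lemma complex_ImJ x : Im x^* = - Im x. Proof. by case: x. Qed.

Context {G : CompactGroup R}.
Local Notation T := (g_sigma_algebraType (@open (cgT G))).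
Local Notation mu := (cg_haar G).

Definition ccontinuous (F : G -> R[i]) :=
  continuous (fun g => Re (F g)) /\ continuous (fun g => Im (F g)).

Lemma ccontinuous_cst c : ccontinuous (fun _ => c).
Proof. by split => x; exact: cvg_cst. Qed.

Lemma ccontinuousD F1 F2 :
  ccontinuous F1 -> ccontinuous F2 -> ccontinuous (fun g => F1 g + F2 g).
Proof.
move=> [r1 i1] [r2 i2]; split => x.
  by under eq_fun do rewrite complex_ReD; exact: (continuousD (r1 x) (r2 x)).
by under eq_fun do rewrite complex_ImD; exact: (continuousD (i1 x) (i2 x)).
Qed.

Lemma ccontinuousM F1 F2 :
  ccontinuous F1 -> ccontinuous F2 -> ccontinuous (fun g => F1 g * F2 g).
Proof.
move=> [r1 i1] [r2 i2]; split => x.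
  under eq_fun do rewrite complex_ReM.
  exact: (continuousB (continuousM (r1 x) (r2 x)) (continuousM (i1 x) (i2 x))).
under eq_fun do rewrite complex_ImM.
exact: (continuousD (continuousM (r1 x) (i2 x)) (continuousM (i1 x) (r2 x))).
Qed.

Lemma ccontinuousJ F : ccontinuous F -> ccontinuous (fun g => (F g)^*).
Proof.
move=> [r i]; split => x; first by under eq_fun do rewrite complex_ReJ; exact: r.
by under eq_fun do rewrite complex_ImJ; exact: (continuousN (i x)).
Qed.

Lemma ccontinuous_sum n (F : 'I_n -> G -> R[i]) :
  (forall k, ccontinuous (F k)) -> ccontinuous (fun g => \sum_(k < n) F k g).
Proof.
elim: n F => [|n IHn] F cF.
  by under eq_fun do rewrite big_ord0; exact: ccontinuous_cst.
under eq_fun do rewrite big_ord_recr /=.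
by apply: ccontinuousD; [apply: IHn => k | exact: cF].
Qed.

Definition haar_cint (F : G -> R[i]) : R[i] :=
  ((\int[mu]_(x in [set: T]) Re (F x)) +i* (\int[mu]_(x in [set: T]) Im (F x)))%C.

Lemma haar_cint0 : haar_cint (fun _ => 0) = 0.
Proof. by rewrite /haar_cint Rintegral_cst // mul0r. Qed.

Lemma haar_cintD F1 F2 : ccontinuous F1 -> ccontinuous F2 ->
  haar_cint (fun g => F1 g + F2 g) = haar_cint F1 + haar_cint F2.
Proof.
move=> [r1 i1] [r2 i2]; rewrite /haar_cint.
under eq_Rintegral do rewrite complex_ReD.
under [X in (_ +i* X)%C]eq_Rintegral do rewrite complex_ImD.
by rewrite !RintegralD //; exact: continuous_haar_integrable.
Qed.

Lemma haar_cintZ c F :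
  ccontinuous F -> haar_cint (fun g => c * F g) = c * haar_cint F.
Proof.
move=> [r i]; rewrite /haar_cint.
under eq_Rintegral do rewrite complex_ReM -mulNr.
under [X in (_ +i* X)%C]eq_Rintegral do rewrite complex_ImM.
have cZ a (f : G -> R) : continuous f -> continuous (fun g => a * f g).
  by move=> cf x; exact: (continuousM (cvg_cst a) (cf x)).
rewrite !RintegralD //; try by apply: continuous_haar_integrable; apply: cZ.
rewrite !RintegralZl //; try exact: continuous_haar_integrable.
by case: c => a b /=; rewrite mulNr.
Qed.

Lemma haar_cint_sum n (F : 'I_n -> G -> R[i]) : (forall k, ccontinuous (F k)) ->
  haar_cint (fun g => \sum_(k < n) F k g) = \sum_(k < n) haar_cint (F k).
Proof.
elim: n F => [|n IHn] F cF.
  by under eq_fun do rewrite big_ord0; rewrite big_ord0 haar_cint0.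
under eq_fun do rewrite big_ord_recr /=.
rewrite haar_cintD ?big_ord_recr ?IHn //.
exact: ccontinuous_sum.
Qed.

Lemma haar_cint_translate h F : ccontinuous F ->
  haar_cint (fun g => F (cg_mul h g)) = haar_cint F.
Proof.
move=> [r i]; rewrite /haar_cint.
rewrite (haar_integral_translate (f := fun g => Re (F g))) //.
by rewrite (haar_integral_translate (f := fun g => Im (F g))).
Qed.

End ComplexHaarIntegral.

Section MatrixHaarIntegral.
Context {R : realType} {G : CompactGroup R}.
Local Notation C := R[i].

Definition mxcontinuous {m n} (F : G -> 'M[C]_(m, n)) :=
  forall i j, ccontinuous (fun g => F g i j).

Lemma mxcontinuous_cst m n (A : 'M[C]_(m, n)) : mxcontinuous (fun _ => A).
Proof. by move=> i j; exact: ccontinuous_cst. Qed.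

Lemma mxcontinuous_mul m n p (F1 : G -> 'M[C]_(m, n)) (F2 : G -> 'M[C]_(n, p)) :
  mxcontinuous F1 -> mxcontinuous F2 -> mxcontinuous (fun g => F1 g *m F2 g).
Proof.
move=> c1 c2 i j; under eq_fun do rewrite mxE.
by apply: ccontinuous_sum => k; exact: ccontinuousM.
Qed.

Lemma mxcontinuous_adj m n (F : G -> 'M[C]_(m, n)) :
  mxcontinuous F -> mxcontinuous (fun g => adj (F g)).
Proof. by move=> c i j; under eq_fun do rewrite adjmxE; exact: ccontinuousJ. Qed.

Lemma mxcontinuous_rep n (U : URep G n) : mxcontinuous U.
Proof. by move=> i j; split; [exact: rep_cont_Re | exact: rep_cont_Im]. Qed.

Definition haar_mxint {m n} (F : G -> 'M[C]_(m, n)) : 'M[C]_(m, n) :=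
  \matrix_(i, j) haar_cint (fun g => F g i j).

Lemma haar_mxint_mull m n p (A : 'M[C]_(m, n)) (F : G -> 'M[C]_(n, p)) :
  mxcontinuous F -> haar_mxint (fun g => A *m F g) = A *m haar_mxint F.
Proof.
move=> cF; apply/matrixP => i j; rewrite !mxE.
under eq_fun do rewrite mxE.
rewrite haar_cint_sum => [|k]; last exact: ccontinuousM (ccontinuous_cst _) (cF _ _).
by apply: eq_bigr => k _; rewrite haar_cintZ // mxE.
Qed.

Lemma haar_mxint_mulr m n p (F : G -> 'M[C]_(m, n)) (B : 'M[C]_(n, p)) :
  mxcontinuous F -> haar_mxint (fun g => F g *m B) = haar_mxint F *m B.
Proof.
move=> cF; apply/matrixP => i j; rewrite !mxE.
under eq_fun do rewrite mxE; under eq_fun do under eq_bigr do rewrite mulrC.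
rewrite haar_cint_sum => [|k]; last exact: ccontinuousM (ccontinuous_cst _) (cF _ _).
by apply: eq_bigr => k _; rewrite haar_cintZ // mxE mulrC.
Qed.

Lemma haar_mxint_translate m n h (F : G -> 'M[C]_(m, n)) :
  mxcontinuous F -> haar_mxint (fun g => F (cg_mul h g)) = haar_mxint F.
Proof.
move=> cF; apply/matrixP => i j.
by rewrite !mxE (haar_cint_translate h (F := fun g => F g i j)).
Qed.

Lemma twirlE n (U : URep G n) s :
  twirl U s = haar_mxint (fun g => U g *m s *m adj (U g)).
Proof. by []. Qed.

End MatrixHaarIntegral.

Section Twirl.
Context {R : realType} {G : CompactGroup R} {n : nat} (U : URep G n).
Local Notation C := R[i].

Lemma rep_unitaryC g : adj (U g) *m U g = 1%:M.
Proof. exact: mulmx1C (rep_unitary U g). Qed.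

Lemma rep_inv g : U (cg_inv g) = adj (U g).
Proof.
rewrite -[U (cg_inv g)]mulmx1 -(rep_unitary U g) mulmxA -rep_morph.
by rewrite cg_mulVg rep_one mul1mx.
Qed.

Lemma mxcontinuous_conj_rep (s : 'M[C]_n) :
  mxcontinuous (fun g => U g *m s *m adj (U g)).
Proof.
apply/mxcontinuous_mul/mxcontinuous_adj/mxcontinuous_rep.
exact/mxcontinuous_mul/mxcontinuous_cst/mxcontinuous_rep.
Qed.

Lemma mulmx_twirl m p (s : 'M[C]_n) (L : 'M[C]_(m, n)) (K : 'M[C]_(n, p)) :
  L *m twirl U s *m K = haar_mxint (fun g => L *m (U g *m s *m adj (U g)) *m K).
Proof.
have cs := mxcontinuous_conj_rep s.
rewrite twirlE -haar_mxint_mull // -haar_mxint_mulr //.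
exact/mxcontinuous_mul/cs/mxcontinuous_cst.
Qed.

Lemma twirl_conj s h : U h *m twirl U s *m adj (U h) = twirl U s.
Proof.
rewrite mulmx_twirl.
under eq_fun do rewrite !mulmxA -rep_morph -mulmxA -adjmx_mul -rep_morph.
exact: haar_mxint_translate (mxcontinuous_conj_rep s).
Qed.

Lemma twirl_comm s h : U h *m twirl U s = twirl U s *m U h.
Proof. by rewrite -{2}(twirl_conj s h) -!mulmxA rep_unitaryC mulmx1. Qed.

Lemma twirl_quad_eq0 (s : 'M[C]_n) (w : 'cV[C]_n) : psdmx s ->
  (adj w *m twirl U s *m w) 0 0 = 0 -> (adj w *m s *m w) 0 0 = 0.
Proof.
move=> s_psd; rewrite mulmx_twirl mxE => I0.
pose f g := complex.Re ((adj w *m (U g *m s *m adj (U g)) *m w) 0 0).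
have cf : continuous f.
  have [] // := mxcontinuous_mul (mxcontinuous_mul (mxcontinuous_cst (adj w))
    (mxcontinuous_conj_rep s)) (mxcontinuous_cst w) 0 0.
have f0 g : 0 <= f g.
  have := s_psd (adj (U g) *m w).
  by rewrite adjmx_mul adjmxK /f !mulmxA lecE => /andP[].
have := continuous_ge0_haar_integral_eq0 cf f0 (congr1 (@complex.Re R) I0) (cg_one G).
rewrite /f rep_one adjmx1 mulmx1 mul1mx.
by move: (s_psd w); case: (_ 0 0) => a b; rewrite lecE /= => /andP[/eqP -> _] ->.
Qed.

End Twirl.

Section Support.
Context {R : realType} {G : CompactGroup R} {n r : nat} (U : URep G n).
Variables (sigma : 'M[R[i]]_n) (V : 'M[R[i]]_(n, r)).
Hypothesis sigma_psd : psdmx sigma.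
Hypothesis V_isometry : adj V *m V = 1%:M.
Hypothesis V_range : (V^T == (twirl U sigma)^T)%MS.
Local Notation P := (V *m adj V).
Local Notation Q := (1%:M - V *m adj V).

Lemma isometry_range_rep_stable h : P *m (U h *m V) = U h *m V.
Proof.
case/andP: V_range => VG GV.
have /submxP[D /(congr1 trmx)] : ((U h *m V)^T <= V^T)%MS.
  rewrite trmx_mul (submx_trans (submxMr _ VG)) // -trmx_mul twirl_comm trmx_mul.
  exact: submx_trans (submxMl _ _) GV.
rewrite trmxK trmx_mul trmxK => ->.
by rewrite !mulmxA -(mulmxA V) V_isometry mulmx1.
Qed.

Lemma isometry_proj_rep h : P *m U h = U h *m P.
Proof.
have VUP : adj V *m U h *m P = adj V *m U h.
  have := congr1 (@adj _ _ _) (isometry_range_rep_stable (cg_inv h)).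
  by rewrite rep_inv !adjmx_mul !adjmxK !mulmxA.
rewrite -mulmxA -VUP !mulmxA -(mulmxA (V *m adj V) (U h) V).
by rewrite isometry_range_rep_stable.
Qed.

Lemma isometry_coproj_twirl : Q *m twirl U sigma = 0.
Proof.
case/andP: V_range => _ /submxP[D /(congr1 trmx)]; rewrite trmxK trmx_mul trmxK => ->.
by rewrite mulmxA mulmxBl mul1mx -mulmxA V_isometry mulmx1 subrr mul0mx.
Qed.

Lemma sigma_coproj_eq0 : sigma *m Q = 0 /\ Q *m sigma = 0.
Proof.
have ker k : let w := Q *m (delta_mx k 0 : 'cV_n) in sigma *m w = 0 /\ adj w *m sigma = 0.
  move=> w; apply: psdmx_ker sigma_psd _.
  apply: (twirl_quad_eq0 (U := U)) sigma_psd _.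
  rewrite /w adjmx_mul isometry_coproj_adj -(mulmxA _ Q) isometry_coproj_twirl.
  by rewrite mulmx0 mul0mx mxE.
split; apply/matrixP => i j.
  have [/(congr1 (fun M : 'cV_n => M i 0)) + _] := ker j.
  by rewrite mulmxA -colE !mxE.
have [_ /(congr1 (fun M : 'rV_n => M 0 j))] := ker i.
by rewrite adjmx_mul isometry_coproj_adj adjmx_delta -mulmxA -rowE !mxE.
Qed.

Lemma isometry_dim_gt0 : \tr sigma = 1 -> (0 < r)%N.
Proof.
have [sQ _] := sigma_coproj_eq0.
have sP : sigma = sigma *m P by move: sQ; rewrite mulmxBr mulmx1 => /subr0_eq.
rewrite lt0n {1}sP mulmxA mxtrace_mulC => tr1; apply/eqP => r0; move: tr1.
rewrite /mxtrace big1 => [/esym/eqP|k _]; first by rewrite oner_eq0.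
by have := ltn_ord k; rewrite {2}r0.
Qed.

End Support.

Theorem lemma7 (R : realType) (G : CompactGroup R) (dA dB : nat)
    (UA : URep G dA) (UB : URep G dB)
    (rho : 'M[R[i]]_dA) (sigma : 'M[R[i]]_dB)
    (Hrho : is_state rho) (Hsigma : is_state sigma)
    (* H_S := supp G(sigma), given by an isometry V : C^r -> H_B whose range
       (column space) is exactly the support (= range) of G(sigma) *)
    (r : nat) (V : 'M[R[i]]_(dB, r))
    (HV : adj V *m V = 1%:M)
    (HVS : (V^T == (twirl UB sigma)^T)%MS) :
  (exists Phi : 'M[R[i]]_dA -> 'M[R[i]]_dB,
      channel Phi /\ covariant UA UB Phi /\ Phi rho = sigma)
  <->
  (exists Psi : 'M[R[i]]_dA -> 'M[R[i]]_r,
      channel Psi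
      /\ covariant UA (fun g => adj V *m UB g *m V) Psi
      /\ V *m Psi rho *m adj V = sigma).
Proof.
have UB_proj := isometry_proj_rep HV HVS.
split=> [[Phi [Phi_ch [Phi_cov Phi_rho]]] | [Psi [Psi_ch [Psi_cov Psi_rho]]]].
- have r_gt0 := isometry_dim_gt0 Hsigma.1 HV HVS Hsigma.2.
  have [sigmaQ Qsigma] := sigma_coproj_eq0 Hsigma.1 HV HVS.
  exists (compress V Phi); split; first exact (channel_compress HV r_gt0 Phi_ch).
  split; first exact (covariant_compress HV UB_proj (rep_unitary UB) Phi_cov).
  by rewrite compress_dilate // Phi_rho.
- exists (fun M => V *m Psi M *m adj V).
  split; first exact (channel_dilate HV Psi_ch).
  by split; first exact (covariant_dilate HV UB_proj Psi_cov).
Qed.
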